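(* In the setting of the context, suppose $\delta_1\ge\delta_2\ge\cdots\ge\delta_s$. Then every vector of $C^\perp\setminus C$ has weight at least $\min_{1\le j\le s}\delta_jn_2(k_j+1)$. Consequently the relative minimum distance $\delta$ of the generalized concatenated quantum code $Q$ (of length $n_1n_2$ and rate $R=r-\frac{2r}{s}\sum_{j=1}^s r'_j$, where $r=sm/n_2$ and $r'_j=k_j/n_1$) satisfies \[ \delta\ge\min_{1\le j\le s}\delta_j r'_j . \]
   Context: $\mathbb{F}_4=\{0,1,\omega,\omega^2\}$, $\omega^2=\omega+1$, $\bar x=x^2$; trace inner product $\langle u,v\rangle=\sum_i(u_i\bar v_i+\bar u_iv_i)\in\mathbb{F}_2$; additive codes are $\mathbb{F}_2$-subspaces, $C^\perp$ is the trace dual, self-orthogonal means $C\subseteq C^\perp$; weight = number of nonzero coordinates; a stabilizer code $[[N,K,D]]$ is given by a self-orthogonal $C$ with $|C|=2^{N-K}$ such that all vectors of $C^\perp\setminus C$ have weight $\ge D$. Outer codes: let $s\ge2$, $m\ge2$, $n_1=2^m-1$, and integers $1\le k_i\le 2^{m-1}-1$ ($1\le i\le s$). For each $i$, let $B_i\subseteq B_i^\perp\subseteq\mathbb{F}_4^{mn_1}$ be the quantum Reed–Solomon pair $B_i=\omega\mathcal B(C^{(i)}_{\rm RS})+\bar\omega\mathcal B(C^{(i)}_{\rm RS})$, $B_i^\perp=\omega\mathcal B(C^{(i)\perp}_{\rm RS})+\bar\omega\mathcal B(C^{(i)\perp}_{\rm RS})$, where $C^{(i)}_{\rm RS}$ is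 the cyclic Reed–Solomon code of length $n_1$ over $\mathbb{F}_{2^m}$ with generator polynomial $\prod_{l=0}^{n_1-k_i-1}(x-\alpha^l)$ ($\alpha$ primitive), $C^{(i)\perp}_{\rm RS}$ its dual (minimum distance $k_i+1$), and $\mathcal B(\cdot)$ is binary expansion w.r.t. a fixed self-dual basis of $\mathbb{F}_{2^m}/\mathbb{F}_2$. Vectors of $\mathbb{F}_4^{mn_1}$ are written as $(b_1,\dots,b_{n_1})$ with $b_l\in\mathbb{F}_4^m$ (one block per Reed–Solomon position). Let $B=B_1\oplus\cdots\oplus B_s$ and $B^\perp=B_1^\perp\oplus\cdots\oplus B_s^\perp$; an element $b=(\mathbf b_1,\dots,\mathbf b_s)$ with $\mathbf b_i=(b_{i,1},\dots,b_{i,n_1})$ is viewed as an $s\times n_1$ array over $\mathbb{F}_4^m$ with columns $c_l=(b_{1,l},\dots,b_{s,l})\in\mathbb{F}_4^{sm}$. Inner codes: $n_2\ge sm$, and self-orthogonal additive codes $C_s\subseteq C_{s-1}\subseteq\cdots\subseteq C_1\subseteq\mathbb{F}_4^{n_2}$ with $|C_j|=2^{n_2-jm}$, such that every vector of $C_j^\perp\setminus C_j$ has weight at least $\delta_jn_2$ (so $C_j$ defines an $[[n_2,jm,\delta_jn_2]]$ code $Q_2^{(j)}$). Let $g_i,h_i\in C_s^\perp$ ($1\le i\le sm$) satisfy $\langle g_i,h_l\rangle=\delta_{il}$, $\langle g_i,g_l\rangle=\langle h_i,h_l\rangle=0$, and for every $j$, $C_j^\perp=C_j+\mathrm{span}_{\mathbb{F}_2}\{g_i,h_i:1\le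 i\le jm\}$. Let $e_1,\dots,e_{sm}$ be the standard basis of $\mathbb{F}_4^{sm}$ and define the $\mathbb{F}_2$-linear map $\rho:\mathbb{F}_4^{sm}\to C_s^\perp/C_s$ by $\rho(\omega e_i)=g_i+C_s$, $\rho(\bar\omega e_i)=h_i+C_s$. The code: $C^\perp=\{(w_1,\dots,w_{n_1})\in(\mathbb{F}_4^{n_2})^{n_1}:\exists b\in B^\perp,\ w_l\in\rho(c_l)\ \forall l\}$ and $C$ is defined the same way with $b\in B$; $C\subseteq C^\perp$, $C^\perp$ is the trace dual of $C$, and $Q$ denotes the stabilizer code defined by $C$. *)

From HB Require Import structures.
From mathcomp Require Import all_boot all_order all_algebra.
Set Implicit Arguments. Unset Strict Implicit. Unset Printing Implicit Defensive.
Import Order.TTheory GRing.Theory Num.Theory.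
Local Open Scope ring_scope.

Section Quaternary.
Variable F : finFieldType.

(* trace (Hermitian) inner product <u,v> = sum_i (u_i * conj v_i + conj u_i * v_i),
   conj x = x^2; its value lies in F_2 = {0,1} inside F *)
Definition tip n (u v : 'rV[F]_n) : F :=
  \sum_(i < n) (u 0 i * (v 0 i) ^+ 2 + (u 0 i) ^+ 2 * v 0 i).

Definition tdual n (C : {set 'rV[F]_n}) : {set 'rV[F]_n} :=
  [set v : 'rV[F]_n | [forall u : 'rV[F]_n, (u \in C) ==> (tip u v == 0)]].

(* additive code = F_2-subspace (F has characteristic 2: 0 and closure under +) *)
Definition additive_code n (C : {set 'rV[F]_n}) : Prop :=
  (0 : 'rV[F]_n) \in C /\ forall u v, u \in C -> v \in C -> u + v \in C.

Definition self_orth n (C : {set 'rV[F]_n}) : Prop := C \subset tdual C.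

Definition wt n (v : 'rV[F]_n) : nat := #|[set i : 'I_n | v 0 i != 0]|.

Definition bF (x : bool) : F := (nat_of_bool x)%:R.

End Quaternary.

Section Outer.
Variables (K : finFieldType) (m n1 : nat) (alpha : K) (beta : 'I_m -> K).

Definition trK (x : K) : K := \sum_(t < m) x ^+ (2 ^ t).

Definition self_dual_basis : Prop :=
  forall i j : 'I_m, trK (beta i * beta j) = (i == j)%:R.

Definition RSgen (k : nat) : {poly K} :=
  \prod_(l < n1 - k) ('X - (alpha ^+ l)%:P).

Definition RS (k : nat) : {set 'rV[K]_n1} :=
  [set c : 'rV[K]_n1 | RSgen k %| \sum_(j < n1) c 0 j *: 'X^j].

Definition RSdual (k : nat) : {set 'rV[K]_n1} :=
  [set d : 'rV[K]_n1 | [forall c : 'rV[K]_n1, (c \in RS k) ==> (\sum_(j < n1) c 0 j * d 0 j == 0)]].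

(* x (an n1 x m bit array, block l = binary expansion of position l)
   lies in the binary expansion B(C) w.r.t. basis beta *)
Definition in_binexp (C : {set 'rV[K]_n1}) (x : 'I_n1 -> 'I_m -> bool) : Prop :=
  exists2 c, c \in C & forall l : 'I_n1,
      c 0 l = \sum_(t < m) (nat_of_bool (x l t))%:R * beta t.

Variables (F : finFieldType) (om : F).

(* b in  om*B(C) + conj(om)*B(C)  (b : blocks b_l in F^m) *)
Definition in_omB (C : {set 'rV[K]_n1}) (b : 'I_n1 -> 'I_m -> F) : Prop :=
  exists x y : 'I_n1 -> 'I_m -> bool,
    [/\ in_binexp C x, in_binexp C y &
        forall l t, b l t = bF F (x l t) * om + bF F (y l t) * om ^+ 2].

Definition in_Bi (k : nat) := in_omB (RS k).
Definition in_Biperp (k : nat) := in_omB (RSdual k).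

End Outer.

Section Concat.
Variables (F : finFieldType) (om : F) (s m n2 : nat).
(* g i t, h i t (1 <= i <= s, t < m) stand for g_{(i-1)m+t+1}, h_{(i-1)m+t+1} *)
Variables (Cs : {set 'rV[F]_n2}) (g h : nat -> 'I_m -> 'rV[F]_n2).

Definition ghcomb (j : nat) (a b : nat -> 'I_m -> bool) : 'rV[F]_n2 :=
  \sum_(1 <= i < j.+1) \sum_(t < m)
     (bF F (a i t) *: g i t + bF F (b i t) *: h i t).

(* w belongs to the coset rho(c), c a column in F^{sm} (c i t = coordinate (i-1)m+t+1),
   rho the F_2-linear map with rho(om e_i) = g_i + Cs, rho(conj om e_i) = h_i + Cs *)
Definition in_rho (c : nat -> 'I_m -> F) (w : 'rV[F]_n2) : Prop :=
  exists a b : nat -> 'I_m -> bool,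
    (forall i t, (1 <= i <= s)%N -> c i t = bF F (a i t) * om + bF F (b i t) * om ^+ 2)
    /\ w - ghcomb s a b \in Cs.

End Concat.

Section GC.
Variables (K : finFieldType) (m n1 : nat) (alpha : K) (beta : 'I_m -> K).
Variables (F : finFieldType) (om : F) (s n2 : nat) (k : nat -> nat).
Variables (Cs : {set 'rV[F]_n2}) (g h : nat -> 'I_m -> 'rV[F]_n2).

(* C^perp : words (w_1..w_{n1}) with w_l in rho(c_l) for some b in B^perp *)
Definition in_GCperp (w : 'I_n1 -> 'rV[F]_n2) : Prop :=
  exists b : nat -> 'I_n1 -> 'I_m -> F,
    (forall i, (1 <= i <= s)%N -> @in_Biperp K m n1 alpha beta F om (k i) (b i)) /\
    forall l : 'I_n1, in_rho om s Cs g h (fun i t => b i l t) (w l).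

Definition in_GC (w : 'I_n1 -> 'rV[F]_n2) : Prop :=
  exists b : nat -> 'I_n1 -> 'I_m -> F,
    (forall i, (1 <= i <= s)%N -> @in_Bi K m n1 alpha beta F om (k i) (b i)) /\
    forall l : 'I_n1, in_rho om s Cs g h (fun i t => b i l t) (w l).

End GC.

Definition wtG (F : finFieldType) n1 n2 (w : 'I_n1 -> 'rV[F]_n2) : nat :=
  \sum_(l < n1) wt (w l).

Definition minj (R : realFieldType) (s : nat) (f : nat -> R) : R :=
  \big[Num.min/f 1%N]_(1 <= j < s.+1) f j.

From HB Require Import structures.
From mathcomp Require Import all_boot all_order all_algebra all_field zify ring.
Set Implicit Arguments. Unset Strict Implicit. Unset Printing Implicit Defensive.
Import Order.TTheory GRing.Theory Num.Theory.
Local Open Scope ring_scope.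

(* Let [b] be the outer word underlying [w] and [j] the largest index with
   [b_j <> 0].  Since the rows of [b] above [j] vanish, every [w_l] lies in
   [C_j + span(g_i, h_i : i <= j) = C_j^perp]; and whenever the block [b_(j,l)]
   is nonzero, pairing [w_l] with [g_j] and [h_j] recovers its coordinates,
   so [w_l] is not in [C_j].  Each such column thus weighs at least
   [delta_j n2], and there are at least [k_j + 1] of them because [b_j] is a
   nonzero word of the binary expansion of the dual Reed-Solomon code, of
   minimum distance [k_j + 1]. *)

Section TraceInnerProduct.
Variable F : finFieldType.
Hypothesis charF : 2%N \in [pchar F].

Lemma tipC n (u v : 'rV[F]_n) : tip u v = tip v u.
Proof. by apply: eq_bigr => i _; rewrite addrC; congr (_ + _); apply: mulrC. Qed.

Lemma tipDl n (u v z : 'rV[F]_n) : tip (u + v) z = tip u z + tip v z.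
Proof.
rewrite /tip -big_split; apply: eq_bigr => i _.
rewrite !mxE sqrrD -mulr_natr (pcharf0 charF) mulr0 addr0.
by rewrite !mulrDl addrACA.
Qed.

Lemma tip0l n (z : 'rV[F]_n) : tip 0 z = 0.
Proof. by rewrite /tip big1 // => i _; rewrite mxE expr0n !mul0r addr0. Qed.

Lemma tip_suml n (I : Type) (r : seq I) (P : pred I) (f : I -> 'rV[F]_n) z :
  tip (\sum_(i <- r | P i) f i) z = \sum_(i <- r | P i) tip (f i) z.
Proof. by elim/big_rec2: _ => [|i a y _ <-]; rewrite ?tip0l ?tipDl. Qed.

Lemma tip_tdual n (C : {set 'rV[F]_n}) u z : z \in tdual C -> u \in C -> tip u z = 0.
Proof. by rewrite inE => /forallP/(_ u)/implyP uz /uz/eqP. Qed.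

Lemma tipZl n (x : bool) (u z : 'rV[F]_n) : tip (bF F x *: u) z = bF F x * tip u z.
Proof. by case: x; rewrite /bF ?scale1r ?mul1r // scale0r mul0r tip0l. Qed.

End TraceInnerProduct.

Section ReedSolomon.
Variables (K : finFieldType) (n1 : nat) (alpha : K).
Hypothesis prim : n1.-primitive_root alpha.

Lemma RSgenE k :
  RSgen n1 alpha k = \prod_(z <- [seq alpha ^+ l | l <- iota 0 (n1 - k)]) ('X - z%:P).
Proof.
by rewrite big_map /RSgen -(big_mkord xpredT (fun l => 'X - (alpha ^+ l)%:P)) /index_iota subn0.
Qed.

(* The polynomial evaluates at [alpha^l] to [\sum_t Q_t \sum_j alpha^((t + l) j)],
   and each inner geometric sum vanishes because [0 < t + l < n1]. *)
Lemma root_evaluation_poly (Q : {poly K}) k l :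
  (k < n1)%N -> Q`_0 = 0 -> (size Q <= k.+1)%N -> (l < n1 - k)%N ->
  root (\sum_(j < n1) Q.[alpha ^+ j] *: 'X^j) (alpha ^+ l).
Proof.
move=> hk hQ0 hQs hl; rewrite /root horner_sum.
under eq_bigr do rewrite hornerZ hornerXn horner_coef big_distrl /=.
rewrite exchange_big big1 // => -[[|t] ht] _ /=.
  by rewrite big1 // => i _; rewrite hQ0 !mul0r.
under eq_bigr => i _ do
  rewrite -mulrA -!exprM -exprD mulnC -mulnDl exprM.
rewrite -big_distrr /=; apply/eqP; rewrite mulf_eq0; apply/orP; right.
have n1_gt0 := prim_order_gt0 prim.
case: n1 n1_gt0 prim hk hl ht => // n _ prim' hk hl ht.
have := expfS_eq1 (alpha ^+ (t.+1 + l)) n.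
rewrite -exprM mulnC exprM (prim_expr_order prim') expr1n eqxx => /esym/orP[|//].
rewrite -(prim_order_dvd prim') => /dvdn_leq; rewrite addSn => /(_ isT).
by move: (leq_trans ht hQs); lia.
Qed.

Lemma evaluation_in_RS (Q : {poly K}) k :
  (k < n1)%N -> Q`_0 = 0 -> (size Q <= k.+1)%N ->
  \row_(j < n1) Q.[alpha ^+ j] \in RS n1 alpha k.
Proof.
move=> hk hQ0 hQs; rewrite inE; under eq_bigr do rewrite mxE; rewrite RSgenE.
set rs := [seq _ | _ <- _].
have rs_roots : all (root (\sum_(j < n1) Q.[alpha ^+ j] *: 'X^j)) rs.
  apply/allP => z /mapP[l]; rewrite mem_iota add0n => /andP[_ hl] ->.
  exact: root_evaluation_poly hk _ _ _.
have uniq_rs : uniq_roots rs.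
  rewrite uniq_rootsE map_inj_in_uniq ?iota_uniq // => i j.
  rewrite !mem_iota !add0n => hi hj /eqP.
  by rewrite (eq_prim_root_expr prim) !modn_small => [/eqP||]; lia.
by have [q ->] := uniq_roots_prod_XsubC rs_roots uniq_rs; rewrite dvdp_mull.
Qed.

Lemma prim_root_neq0 : alpha != 0.
Proof.
have := prim_expr_order prim; case: n1 (prim_order_gt0 prim) => // n _.
by apply: contra_eqN => /eqP->; rewrite expr0n eq_sym oner_eq0.
Qed.

(* Dual of the Reed--Solomon code has minimum distance [k + 1]: a support of
   size [<= k] would let [X * \prod_(j in supp d, j != j0) (X - alpha^j)]
   evaluate to a codeword of [RS k] not orthogonal to [d]. *)
Lemma RSdual_support k (d : 'rV[K]_n1) :
  (k < n1)%N -> d \in RSdual n1 alpha k -> d != 0 ->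
  (k < wt d)%N.
Proof.
move=> hk hd dn0; rewrite /wt; set S := [set l | _]; rewrite ltnNge; apply/negP => hS.
have [j0 hj0] : exists j0, d 0 j0 != 0.
  apply/existsP; apply: contraNT dn0 => /existsPn d0.
  by apply/eqP/rowP => j; rewrite mxE; apply/eqP/negbNE/d0.
pose Q : {poly K} := 'X * \prod_(j <- enum (S :\ j0)) ('X - (alpha ^+ j)%:P).
have QRS : \row_(j < n1) Q.[alpha ^+ j] \in RS n1 alpha k.
  apply: evaluation_in_RS => //; first by rewrite coefXM.
  apply: leq_trans (size_polyMleq _ _) _.
  rewrite size_polyX size_prod_XsubC -cardE.
  by move: hS; rewrite (cardsD1 j0 S) inE hj0; lia.
move: hd; rewrite inE => /forallP/(_ _)/implyP/(_ QRS)/eqP.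
rewrite (bigD1 j0) //= big1 ?addr0 => [|j hj]; last first.
  rewrite mxE; have [/eqP->|dj] := boolP (d 0 j == 0); first by rewrite mulr0.
  rewrite hornerM horner_prod (big_rem j) ?mem_enum ?inE ?hj ?dj //=.
  by rewrite hornerXsubC subrr mul0r mulr0 mul0r.
rewrite mxE => /eqP; rewrite mulf_eq0 (negbTE hj0) orbF; apply/negP.
rewrite hornerM hornerX mulf_neq0 ?expf_neq0 ?prim_root_neq0 // horner_prod.
rewrite prodf_seq_neq0; apply/allP => j; rewrite mem_enum !inE => /andP[hj _].
by rewrite hornerXsubC subr_eq0 (eq_prim_root_expr prim) !modn_small // eq_sym.
Qed.

End ReedSolomon.

Section SelfDualBasis.
Variables (K : finFieldType) (m : nat) (beta : 'I_m -> K).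
Hypothesis charK : 2%N \in [pchar K].
Hypothesis sdb : self_dual_basis beta.

Lemma trKD (x y : K) : trK m (x + y) = trK m x + trK m y.
Proof.
rewrite /trK -big_split; apply: eq_bigr => t _; apply: exprDn_pchar.
by rewrite (eq_pnat _ (pcharf_eq charK)) pnatX pnat_id.
Qed.

Lemma trK0 : trK m (0 : K) = 0.
Proof. by rewrite /trK big1 // => t _; rewrite expr0n expn_eq0. Qed.

Lemma trK_sum (I : Type) (r : seq I) (f : I -> K) :
  trK m (\sum_(i <- r) f i) = \sum_(i <- r) trK m (f i).
Proof. by elim/big_rec2: _ => [|i a y _ <-]; rewrite ?trK0 ?trKD. Qed.

Lemma trK_binexp_coord (x : 'I_m -> bool) t :
  trK m ((\sum_(u < m) (nat_of_bool (x u))%:R * beta u) * beta t) = (nat_of_bool (x t))%:R.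
Proof.
rewrite big_distrl trK_sum (bigD1 t) //= big1 ?addr0 => [|u ut].
  by case: (x t); rewrite ?mul1r ?mul0r ?sdb ?eqxx ?trK0.
by case: (x u); rewrite ?mul1r ?mul0r ?sdb ?(negbTE ut) ?trK0.
Qed.

Lemma binexp_eq0 (x : 'I_m -> bool) :
  \sum_(u < m) (nat_of_bool (x u))%:R * beta u = 0 -> forall t, x t = false.
Proof.
move=> x0 t; have := trK_binexp_coord x t; rewrite x0 mul0r trK0.
by case: (x t) => // /eqP; rewrite eq_sym oner_eq0.
Qed.

End SelfDualBasis.

Section Omega.
Variables (F : finFieldType) (om : F).
Hypothesis hom : om ^+ 2 = om + 1.

Lemma omega_neq0 : om != 0.
Proof. by apply: contra_eq_neq hom => ->; rewrite expr0n add0r eq_sym oner_eq0. Qed.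

Lemma omega_comb_eq0 (x y : bool) :
  bF F x * om + bF F y * om ^+ 2 = 0 -> x = false /\ y = false.
Proof.
have om3 : om + om ^+ 2 = om ^+ 3.
  by rewrite [RHS]exprS [in RHS]hom mulrDr mulr1 -expr2 addrC.
case: x; case: y; rewrite /bF ?mul1r ?mul0r ?addr0 ?add0r ?om3 //= => /eqP;
  by rewrite ?expf_eq0 (negbTE omega_neq0) ?andbF.
Qed.

End Omega.

Definition block_support (F : finFieldType) n1 m (b : 'I_n1 -> 'I_m -> F) : {set 'I_n1} :=
  [set l | [exists t, b l t != 0]].

Section OuterCodes.
Variables (K F : finFieldType) (m n1 : nat) (alpha : K) (beta : 'I_m -> K) (om : F).

Lemma in_Bi0 k (b : 'I_n1 -> 'I_m -> F) :
  (forall l t, b l t = 0) -> in_Bi alpha beta om k b.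
Proof.
move=> b0; have RS0 : in_binexp beta (RS n1 alpha k) (fun _ _ => false).
  exists 0; last by move=> l; rewrite mxE big1 // => t _; rewrite mul0r.
  by rewrite inE big1 ?dvdp0 // => j _; rewrite mxE scale0r.
by exists (fun _ _ => false), (fun _ _ => false); split=> // l t; rewrite b0 /bF !mul0r addr0.
Qed.

Lemma wt_binexp_le (c : 'rV[K]_n1) (z : 'I_n1 -> 'I_m -> bool) (S : {set 'I_n1}) :
  (forall l, c 0 l = \sum_(t < m) (nat_of_bool (z l t))%:R * beta t) ->
  (forall l t, z l t -> l \in S) -> (wt c <= #|S|)%N.
Proof.
move=> ec zS; apply/subset_leq_card/subsetP => l; rewrite inE ec.
apply: contraR => lS; apply/eqP/big1 => t _.
by case: (boolP (z l t)) => [/zS zl|_]; rewrite ?zl in lS; rewrite ?mul0r.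
Qed.

Hypotheses (prim : n1.-primitive_root alpha) (charK : 2%N \in [pchar K]).
Hypotheses (sdb : self_dual_basis beta) (hom : om ^+ 2 = om + 1).

Lemma in_Biperp_support k (b : 'I_n1 -> 'I_m -> F) :
  (k < n1)%N -> in_Biperp alpha beta om k b -> (exists l t, b l t != 0) ->
  (k < #|block_support b|)%N.
Proof.
move=> hk [x [y [[cx cxD ex] [cy cyD ey] eb]]] [l0 [t0 nz]].
have supp z c : c \in RSdual n1 alpha k ->
    (forall l, c 0 l = \sum_(t < m) (nat_of_bool (z l t))%:R * beta t) ->
    z l0 t0 -> (forall l t, z l t -> b l t != 0) -> (k < #|block_support b|)%N.
  move=> cD ec zl0 zb; apply: leq_trans (RSdual_support prim hk cD _) _.
    apply: contraTneq zl0 => c0.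
    by rewrite (binexp_eq0 charK sdb (x := z l0)) // -ec c0 mxE.
  by apply: wt_binexp_le ec _ => l t /zb bnz; rewrite inE; apply/existsP; exists t.
have [xl0|xl0] := boolP (x l0 t0).
  apply: supp cxD ex xl0 _ => l t xt; rewrite eb.
  by apply/eqP => /(omega_comb_eq0 hom)[xf _]; rewrite xf in xt.
have [yl0|yl0] := boolP (y l0 t0).
  apply: supp cyD ey yl0 _ => l t yt; rewrite eb.
  by apply/eqP => /(omega_comb_eq0 hom)[_ yf]; rewrite yf in yt.
by move: nz; rewrite eb (negbTE xl0) (negbTE yl0) /bF !mul0r addr0 eqxx.
Qed.

End OuterCodes.

Lemma chain_subset (T : finType) (C : nat -> {set T}) s :
  (forall j, (1 <= j < s)%N -> C j.+1 \subset C j) ->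
  forall i j, (1 <= i <= j)%N -> (j <= s)%N -> C j \subset C i.
Proof.
move=> nest i; elim=> [|j IH] /andP[i1 ij] js; first by move: i1 ij; case: i.
have [->|ne] := eqVneq i j.+1; first exact: subxx.
apply: subset_trans (nest j _) (IH _ _); lia.
Qed.

Lemma sum_kronecker (R : pzSemiRingType) s m j (t0 : 'I_m) (f : nat -> 'I_m -> R) :
  (1 <= j <= s)%N ->
  \sum_(1 <= i < s.+1) \sum_(t < m) f i t * ((i == j) && (t == t0))%:R = f j t0.
Proof.
move=> hj; rewrite (bigD1_seq j) ?mem_index_iota ?iota_uniq //= [X in _ + X]big1 ?addr0.
  by rewrite (bigD1 t0) //= !eqxx mulr1 big1 ?addr0 // => t /negbTE->; rewrite andbF mulr0.
by move=> i /negbTE ij; rewrite big1 // => t _; rewrite ij mulr0.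
Qed.

Section InnerCodes.
Variables (F : finFieldType) (s m n2 : nat).
Variables (g h : nat -> 'I_m -> 'rV[F]_n2).

Lemma ghcomb_delta j t0 (x y : bool) : (1 <= j)%N ->
  ghcomb g h j (fun i t => [&& x, i == j & t == t0]) (fun i t => [&& y, i == j & t == t0])
  = bF F x *: g j t0 + bF F y *: h j t0.
Proof.
move=> j1; rewrite /ghcomb big_nat_recr //= big1_seq ?add0r => [|i].
  rewrite (bigD1 t0) //= !eqxx !andbT big1 ?addr0 // => t /negbTE tt0.
  by rewrite tt0 !andbF /bF !scale0r addr0.
rewrite mem_index_iota => /andP[_ /andP[_ ij]]; rewrite big1 // => t _.
by rewrite (ltn_eqF ij) !andbF /bF !scale0r addr0.
Qed.

Lemma ghcomb_trunc j a b : (j <= s)%N ->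
  (forall i t, (j < i <= s)%N -> a i t = false /\ b i t = false) ->
  ghcomb g h s a b = ghcomb g h j a b.
Proof.
move=> js ab0; rewrite /ghcomb (big_cat_nat _ (n := j.+1)) //= ?ltnS //.
rewrite [X in _ + X]big1_seq ?addr0 // => i; rewrite mem_index_iota => /andP[_ ji].
by rewrite big1 // => t _; have [-> ->] := ab0 i t ji; rewrite /bF !scale0r addr0.
Qed.

Hypothesis charF : 2%N \in [pchar F].
Hypothesis hgh : forall i t i' t', (1 <= i <= s)%N -> (1 <= i' <= s)%N ->
  tip (g i t) (h i' t') = ((i == i') && (t == t'))%:R.
Hypothesis hgg : forall i t i' t', (1 <= i <= s)%N -> (1 <= i' <= s)%N ->
  tip (g i t) (g i' t') = 0.
Hypothesis hhh : forall i t i' t', (1 <= i <= s)%N -> (1 <= i' <= s)%N ->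
  tip (h i t) (h i' t') = 0.

Lemma tip_ghcomb a b z :
  tip (ghcomb g h s a b) z = \sum_(1 <= i < s.+1) \sum_(t < m)
     (bF F (a i t) * tip (g i t) z + bF F (b i t) * tip (h i t) z).
Proof.
rewrite tip_suml //; apply: eq_bigr => i _.
by rewrite tip_suml //; apply: eq_bigr => t _; rewrite tipDl // !tipZl.
Qed.

Lemma tip_ghcomb_g a b j t0 : (1 <= j <= s)%N ->
  tip (ghcomb g h s a b) (g j t0) = bF F (b j t0).
Proof.
move=> hj; rewrite tip_ghcomb -(sum_kronecker t0 (fun i t => bF F (b i t)) hj).
apply: eq_big_seq => i; rewrite mem_index_iota ltnS => hi; apply: eq_bigr => t _.
by rewrite hgg // mulr0 add0r tipC // hgh // [j == i]eq_sym [t0 == t]eq_sym.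
Qed.

Lemma tip_ghcomb_h a b j t0 : (1 <= j <= s)%N ->
  tip (ghcomb g h s a b) (h j t0) = bF F (a j t0).
Proof.
move=> hj; rewrite tip_ghcomb -(sum_kronecker t0 (fun i t => bF F (a i t)) hj).
apply: eq_big_seq => i; rewrite mem_index_iota ltnS => hi; apply: eq_bigr => t _.
by rewrite hgh // hhh // mulr0 addr0.
Qed.

End InnerCodes.

Section InnerCosets.
Variables (F : finFieldType) (om : F) (s m n2 : nat).
Variables (C : nat -> {set 'rV[F]_n2}) (g h : nat -> 'I_m -> 'rV[F]_n2).
Hypotheses (charF : 2%N \in [pchar F]) (hom : om ^+ 2 = om + 1).
Hypothesis hCadd : forall j, (1 <= j <= s)%N -> additive_code (C j).
Hypothesis hCnest : forall j, (1 <= j < s)%N -> C j.+1 \subset C j.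
Hypothesis hgC : forall i t, (1 <= i <= s)%N -> g i t \in tdual (C s).
Hypothesis hhC : forall i t, (1 <= i <= s)%N -> h i t \in tdual (C s).
Hypothesis hgh : forall i t i' t', (1 <= i <= s)%N -> (1 <= i' <= s)%N ->
  tip (g i t) (h i' t') = ((i == i') && (t == t'))%:R.
Hypothesis hgg : forall i t i' t', (1 <= i <= s)%N -> (1 <= i' <= s)%N ->
  tip (g i t) (g i' t') = 0.
Hypothesis hhh : forall i t i' t', (1 <= i <= s)%N -> (1 <= i' <= s)%N ->
  tip (h i t) (h i' t') = 0.
Hypothesis hspan : forall j, (1 <= j <= s)%N -> forall v,
  v \in tdual (C j) <->
  exists c, exists a b : nat -> 'I_m -> bool, c \in C j /\ v = c + ghcomb g h j a b.

Lemma gh_in_tdual j t0 : (1 <= j <= s)%N ->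
  g j t0 \in tdual (C j) /\ h j t0 \in tdual (C j).
Proof.
move=> hj; have [C0 _] := hCadd hj; have j1 := (andP hj).1.
split; apply/(hspan hj); exists 0.
  exists (fun i t => [&& true, i == j & t == t0]), (fun i t => [&& false, i == j & t == t0]).
  by rewrite add0r ghcomb_delta // /bF scale1r scale0r addr0.
exists (fun i t => [&& false, i == j & t == t0]), (fun i t => [&& true, i == j & t == t0]).
by rewrite add0r ghcomb_delta // /bF scale1r scale0r add0r.
Qed.

Lemma tip_rho_coset w a b z :
  w - ghcomb g h s a b \in C s -> z \in tdual (C s) -> tip w z = tip (ghcomb g h s a b) z.
Proof.
move=> hw hz; rewrite -[in LHS](subrK (ghcomb g h s a b) w) tipDl //.
by rewrite (tip_tdual hz hw) add0r.
Qed.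

(* Pairing with [g_j] and [h_j] reads off the [j]-th coordinate of [c]. *)
Lemma rho_notin_code c w j t0 : (1 <= j <= s)%N ->
  in_rho om s (C s) g h c w -> c j t0 != 0 -> w \notin C j.
Proof.
move=> hj [a [b [ec hw]]]; apply: contra => wC.
have [gD hD] := gh_in_tdual t0 hj.
have b0 : bF F (b j t0) = 0.
  rewrite -(tip_ghcomb_g charF hgh hgg a b t0 hj) -(tip_rho_coset hw (hgC _ hj)).
  exact: tip_tdual gD wC.
have a0 : bF F (a j t0) = 0.
  rewrite -(tip_ghcomb_h charF hgh hhh a b t0 hj) -(tip_rho_coset hw (hhC _ hj)).
  exact: tip_tdual hD wC.
by rewrite ec // a0 b0 !mul0r addr0.
Qed.

Lemma rho_in_tdual c w j : (1 <= j <= s)%N ->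
  (forall i t, (j < i <= s)%N -> c i t = 0) ->
  in_rho om s (C s) g h c w -> w \in tdual (C j).
Proof.
move=> hj ctop [a [b [ec hw]]]; apply/(hspan hj).
exists (w - ghcomb g h s a b), a, b; split.
  exact: subsetP (chain_subset hCnest hj (leqnn s)) _ hw.
rewrite (ghcomb_trunc g h (j := j)) ?subrK //; first by case/andP: hj.
move=> i t /andP[ji i_s]; apply: (omega_comb_eq0 hom).
by rewrite -ec ?ctop ?ji // i_s (leq_ltn_trans (leq0n j) ji).
Qed.

End InnerCosets.

Lemma minj_le (R : realFieldType) s (f : nat -> R) j : (1 <= j <= s)%N -> minj s f <= f j.
Proof.
move=> hj; have : j \in index_iota 1 s.+1 by rewrite mem_index_iota ltnS.
rewrite /minj; elim: (index_iota 1 s.+1) => //= i r IH.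
by rewrite inE big_cons ge_min => /orP[/eqP->|/IH->]; rewrite ?lexx ?orbT.
Qed.

Lemma exists_top_index (P : pred nat) s :
  (exists2 i, (1 <= i <= s)%N & P i) ->
  exists j, [/\ (1 <= j <= s)%N, P j & forall i, (j < i <= s)%N -> ~~ P i].
Proof.
move=> [i0 hi0 Pi0].
have exQ : exists i, ((1 <= i <= s)%N && P i) by exists i0; rewrite hi0.
have ubQ i : (1 <= i <= s)%N && P i -> (i <= s)%N by case/andP => /andP[].
case: (ex_maxnP exQ ubQ) => j /andP[hj Pj] jmax; exists j; split=> // i /andP[ji i_s].
have i1 : (1 <= i)%N by move: hj ji; lia.
by apply: contraL ji => Pi; rewrite -leqNgt jmax // Pi i1 i_s.
Qed.

Lemma card_mul_le_sum (R : numDomainType) (I : finType) (A : {set I}) (f : I -> R) x :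
  (forall i, 0 <= f i) -> (forall i, i \in A -> x <= f i) ->
  #|A|%:R * x <= \sum_i f i.
Proof.
move=> f_ge0 Af; rewrite (bigID (mem A)) /= -[leLHS]addr0 lerD ?sumr_ge0 //.
by rewrite mulr_natl -sumr_const ler_sum.
Qed.

Lemma ler_natM_card (R : realDomainType) (a b : nat) (x W : R) :
  (a <= b)%N -> 0 <= W -> b%:R * x <= W -> a%:R * x <= W.
Proof.
move=> ab W0; have [x0|x0] := lerP 0 x.
  by apply: le_trans; rewrite ler_wpM2r // ler_nat.
by move=> _; apply: le_trans W0; rewrite mulr_ge0_le0 // ltW.
Qed.

Lemma ler_relative (R : realFieldType) (x W : R) k n1 n2 :
  (0 < n1)%N -> (0 < n2)%N -> 0 <= W ->
  x * (n2 * k.+1)%:R <= W -> x * (k%:R / n1%:R) <= W / (n1 * n2)%:R.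
Proof.
move=> n1_gt0 n2_gt0 W0 xW; have [x0|x0] := lerP 0 x; last first.
  by apply: le_trans (_ : 0 <= _); rewrite ?divr_ge0 // mulr_le0_ge0 ?divr_ge0 // ltW.
rewrite ler_pdivlMr ?ltr0n ?muln_gt0 ?n1_gt0 //.
have -> : x * (k%:R / n1%:R) * (n1 * n2)%:R = x * (n2 * k)%:R.
  by rewrite !natrM; field; rewrite pnatr_eq0 -lt0n.
by apply: le_trans xW; rewrite ler_wpM2l // ler_nat leq_mul2l leqnSn orbT.
Qed.

Theorem lemma2
  (* F = F_4 *)
  (F : finFieldType) (om : F) (hF : #|F| = 4%N) (hom : om ^+ 2 = om + 1)
  (s m n1 n2 : nat) (hs : (2 <= s)%N) (hm : (2 <= m)%N) (hn1 : n1 = (2 ^ m - 1)%N)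
  (* K = F_{2^m}, alpha primitive, beta a self-dual basis *)
  (K : finFieldType) (hK : #|K| = (2 ^ m)%N) (alpha : K)
  (halpha : n1.-primitive_root alpha)
  (beta : 'I_m -> K) (hbeta : self_dual_basis beta)
  (k : nat -> nat)
  (hk : forall i, (1 <= i <= s)%N -> (1 <= k i <= 2 ^ (m - 1) - 1)%N)
  (hn2 : (s * m <= n2)%N)
  (* inner codes C_1 ⊇ ... ⊇ C_s *)
  (R : realFieldType) (delta : nat -> R)
  (C : nat -> {set 'rV[F]_n2})
  (hCadd : forall j, (1 <= j <= s)%N -> additive_code (C j))
  (hCso : forall j, (1 <= j <= s)%N -> self_orth (C j))
  (hCcard : forall j, (1 <= j <= s)%N -> #|C j| = (2 ^ (n2 - j * m))%N)
  (hCnest : forall j, (1 <= j < s)%N -> C j.+1 \subset C j)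
  (hCdist : forall j, (1 <= j <= s)%N ->
     forall v, v \in tdual (C j) :\: C j -> delta j * n2%:R <= (wt v)%:R)
  (* g_i, h_i *)
  (g h : nat -> 'I_m -> 'rV[F]_n2)
  (hgC : forall i t, (1 <= i <= s)%N -> g i t \in tdual (C s))
  (hhC : forall i t, (1 <= i <= s)%N -> h i t \in tdual (C s))
  (hgh : forall i t i' t', (1 <= i <= s)%N -> (1 <= i' <= s)%N ->
     tip (g i t) (h i' t') = ((i == i') && (t == t'))%:R)
  (hgg : forall i t i' t', (1 <= i <= s)%N -> (1 <= i' <= s)%N ->
     tip (g i t) (g i' t') = 0)
  (hhh : forall i t i' t', (1 <= i <= s)%N -> (1 <= i' <= s)%N ->
     tip (h i t) (h i' t') = 0)
  (hspan : forall j, (1 <= j <= s)%N -> forall v,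
     v \in tdual (C j) <->
     exists c, exists a b : nat -> 'I_m -> bool,
       c \in C j /\ v = c + @ghcomb F m n2 g h j a b)
  (* hypothesis of the lemma *)
  (hdelta : forall j, (1 <= j < s)%N -> delta j.+1 <= delta j) :
  forall w : 'I_n1 -> 'rV[F]_n2,
    @in_GCperp K m n1 alpha beta F om s n2 k (C s) g h w ->
    ~ @in_GC K m n1 alpha beta F om s n2 k (C s) g h w ->
    minj s (fun j => delta j * (n2 * (k j).+1)%:R) <= (wtG w)%:R
    /\ minj s (fun j => delta j * ((k j)%:R / n1%:R))
         <= (wtG w)%:R / (n1 * n2)%:R.
Proof.
move=> w [b [b_perp w_rho] w_notGC].
have charF : 2%N \in [pchar F] by apply: (@card_finPcharP _ 2 2).
have charK : 2%N \in [pchar K] by apply: (@card_finPcharP _ 2 m).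
have nz_row : exists2 i, (1 <= i <= s)%N & [exists l, exists t, b i l t != 0].
  have [/existsP[i /andP[i1 nz]]|/existsPn rows0] :=
    boolP [exists i : 'I_s.+1, (0 < i)%N && [exists l, exists t, b i l t != 0]].
    by exists i; rewrite // i1 -ltnS ltn_ord.
  case: w_notGC; exists b; split=> // i /andP[i1 i_s]; apply: in_Bi0 => l t.
  move: (rows0 (Ordinal (i_s : (i < s.+1)%N))); rewrite /= i1 /=.
  by move=> /existsPn/(_ l)/existsPn/(_ t); rewrite negbK => /eqP.
have [j [hj /existsP[l0 /existsP[t0 nz0]] top_j]] := exists_top_index nz_row.
have kj_lt : (k j < n1)%N.
  have := hk j hj; have : (2 ^ m = 2 * 2 ^ (m - 1))%N by rewrite -expnS subn1 prednK // ltnW.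
  by rewrite hn1; lia.
have heavy l : l \in block_support (b j) -> delta j * n2%:R <= (wt (w l))%:R.
  rewrite inE => /existsP[t1 nz]; apply: (hCdist j hj); rewrite inE.
  rewrite (rho_notin_code charF hCadd hgC hhC hgh hgg hhh hspan hj (w_rho l) nz) /=.
  apply: (rho_in_tdual hom hCnest hspan hj _ (w_rho l)) => i t /top_j.
  by move=> /existsPn/(_ l)/existsPn/(_ t); rewrite negbK => /eqP.
have many := in_Biperp_support halpha charK hbeta hom kj_lt (b_perp j hj)
  (ex_intro _ l0 (ex_intro _ t0 nz0)).
have Wj : delta j * (n2 * (k j).+1)%:R <= (wtG w)%:R.
  rewrite natrM mulrA mulrC; apply: ler_natM_card many (ler0n _ _) _.
  by rewrite /wtG natr_sum; apply: card_mul_le_sum heavy => l; apply: ler0n.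
split; apply: le_trans (minj_le _ hj) _ => //=.
by apply: ler_relative Wj; rewrite ?ler0n //; move: hs hm hn2 kj_lt; nia.
Qed.
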